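(* Let $(\alpha,\beta)\in Q$ and let $x^*=\lim_kx_k$ for the GAFS sequence. Define $G(k)=\sum_{j=k}^\infty\gamma_j$. There exists $\bar N>0$ such that for all $k\ge0$, $$\frac{G(k)}{c^Tx_k-c^Tx^*}\le\bar N.$$
   Context: Let $A\in\mathbb{R}^{m\times n}$ have rank $m$, $b\in\mathbb{R}^m$, $c\in\mathbb{R}^n$. Primal LP: $\min c^Tx$ s.t. $Ax=b$, $x\ge 0$. Standing assumptions: the primal has a strictly positive feasible point; $c^Tx$ is not constant on the primal feasible region; the LP has an optimal solution. For $u\in\mathbb{R}^n$, $\gamma(u)=\max\{u_i: u_i>0\}$. For $x>0$, $X=\mathrm{diag}(x)$. GAFS sequence: fix $\alpha\in(0,1)$, $\beta\in[0,1)$, and $x_0>0$ with $Ax_0=b$. For $k\ge0$ let $X_k=\mathrm{diag}(x_k)$, $y_k=(AX_k^2A^T)^{-1}AX_k^2c$, $s_k=c-A^Ty_k$. Set $x_1=x_0-\alpha\frac{X_0^2s_0}{\gamma(X_0s_0)}$ and, for $k\ge1$, $x_{k+1}=x_k-\alpha\frac{X_k^2s_k}{\gamma(X_ks_k)}+\beta\frac{x_k-x_{k-1}}{\|X_k^{-1}(x_k-x_{k-1})\|_\infty}$ (all quantities assumed well defined). Write $\beta_k=\beta/\|X_k^{-1}(x_k-x_{k-1})\|_\infty$ ($k\ge1$), $\gamma_0=1$, $\gamma_k=\prod_{j=1}^k\beta_j$. $Q=\{(\alpha,\beta): 0<\alpha<1,\ 0\le\beta<1/\phi,\ \alpha+\beta\le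 2/3\}$ with $\phi=(1+\sqrt5)/2$. *)

(* Stdlib reals. Vectors in R^k are functions nat -> R (only indices < k matter);
   an m x n matrix is a function nat -> nat -> R (entry (i,j), i < m, j < n). *)
From Stdlib Require Import Reals.
Open Scope R_scope.

Fixpoint rsum (n : nat) (f : nat -> R) : R :=
  match n with O => 0 | S p => rsum p f + f p end.

Fixpoint rmaxn (n : nat) (f : nat -> R) : R :=
  match n with O => 0 | S p => Rmax (rmaxn p f) (f p) end.

Definition dot (n : nat) (u v : nat -> R) : R := rsum n (fun i => u i * v i).

Definition matvec (n : nat) (A : nat -> nat -> R) (x : nat -> R) : nat -> R :=
  fun i => rsum n (fun j => A i j * x j).
Definition tmatvec (m : nat) (A : nat -> nat -> R) (y : nat -> R) : nat -> R :=
  fun j => rsum m (fun i => A i j * y i).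

Definition full_row_rank (m n : nat) (A : nat -> nat -> R) : Prop :=
  forall y : nat -> R,
    (forall j, (j < n)%nat -> tmatvec m A y j = 0) -> forall i, (i < m)%nat -> y i = 0.

Definition feasible (m n : nat) (A : nat -> nat -> R) (b x : nat -> R) : Prop :=
  (forall i, (i < m)%nat -> matvec n A x i = b i) /\ (forall j, (j < n)%nat -> 0 <= x j).

(* gamma(u) = max { u_i : u_i > 0 } (computed as max(0, u_0, ..., u_{n-1}),
   which coincides with it whenever some u_i > 0) *)
Definition gam (n : nat) (u : nat -> R) : R := rmaxn n u.

Definition infnorm (n : nat) (u : nat -> R) : R := rmaxn n (fun i => Rabs (u i)).

Definition sres (m : nat) (A : nat -> nat -> R) (c : nat -> R) (yk : nat -> R) : nat -> R :=
  fun j => c j - tmatvec m A yk j.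

Definition momnorm (n : nat) (x : nat -> nat -> R) (k : nat) : R :=
  infnorm n (fun i => (x k i - x (pred k) i) / x k i).

Definition betak (n : nat) (beta : R) (x : nat -> nat -> R) (k : nat) : R :=
  beta / momnorm n x k.

Fixpoint gammak (n : nat) (beta : R) (x : nat -> nat -> R) (k : nat) : R :=
  match k with
  | O => 1
  | S p => gammak n beta x p * betak n beta x (S p)
  end.

(* The GAFS sequence (x_k) with the associated dual estimates (y_k):
   y_k = (A X_k^2 A^T)^{-1} A X_k^2 c is given through the normal equations
   A X_k^2 A^T y_k = A X_k^2 c, and all quantities are assumed well defined. *)
Definition GAFS (m n : nat) (A : nat -> nat -> R) (c : nat -> R) (alpha beta : R)
    (x y : nat -> nat -> R) : Prop :=
  (forall k i, (i < m)%nat ->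
     rsum n (fun j => A i j * (x k j)^2 * tmatvec m A (y k) j)
     = rsum n (fun j => A i j * (x k j)^2 * c j)) /\
  (forall j, (j < n)%nat ->
     x 1%nat j = x 0%nat j
       - alpha * ((x 0%nat j)^2 * sres m A c (y 0%nat) j)
                 / gam n (fun i => x 0%nat i * sres m A c (y 0%nat) i)) /\
  (forall k j, (1 <= k)%nat -> (j < n)%nat ->
     x (S k) j = x k j
       - alpha * ((x k j)^2 * sres m A c (y k) j)
                 / gam n (fun i => x k i * sres m A c (y k) i)
       + beta * (x k j - x (pred k) j) / momnorm n x k) /\
  (* well-definedness: gamma(X_k s_k) exists, and the momentum normalisation is nonzero *)
  (forall k, exists i, (i < n)%nat /\ 0 < x k i * sres m A c (y k) i) /\
  (forall k, (1 <= k)%nat -> momnorm n x k <> 0).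

Definition inQ (alpha beta : R) : Prop :=
  0 < alpha < 1 /\ 0 <= beta < 2 / (1 + sqrt 5) /\ alpha + beta <= 2/3.

From Stdlib Require Import Reals Lra Lia.
Open Scope R_scope.

(* By the normal equations, the affine-scaling direction X_k^2 s_k satisfies
   c^T X_k^2 s_k = ||X_k s_k||^2, so the GAFS cost f_k := c^T x_k obeys
   f_k - f_{k+1} = a_k + beta_k (f_{k-1} - f_k) with a_k > 0 and beta_k >= 0.
   Unrolling gives f_k - f_{k+1} >= gamma_k a_0, and summing from k on,
   a_0 G(k) <= f_k - c^T x^*; hence Nbar = 1 / a_0 works. *)

Lemma rsum_ext n f g : (forall i, (i < n)%nat -> f i = g i) -> rsum n f = rsum n g.
Proof.
  induction n as [|n IH]; simpl; intros H; [reflexivity|].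
  rewrite IH by (intros; apply H; lia).
  rewrite H by lia; reflexivity.
Qed.

Lemma rsum_plus n f g : rsum n (fun i => f i + g i) = rsum n f + rsum n g.
Proof. induction n as [|n IH]; simpl; [lra|]. rewrite IH; lra. Qed.

Lemma rsum_scal n a f : rsum n (fun i => a * f i) = a * rsum n f.
Proof. induction n as [|n IH]; simpl; [lra|]. rewrite IH; lra. Qed.

Lemma rsum_zero n : rsum n (fun _ => 0) = 0.
Proof. induction n as [|n IH]; simpl; [lra|]. rewrite IH; lra. Qed.

Lemma rsum_swap n m (f : nat -> nat -> R) :
  rsum n (fun j => rsum m (fun i => f i j)) = rsum m (fun i => rsum n (fun j => f i j)).
Proof.
  induction n as [|n IH]; simpl; [now rewrite rsum_zero|].
  rewrite IH; now rewrite <- rsum_plus.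
Qed.

Lemma rsum_nonneg n f : (forall i, (i < n)%nat -> 0 <= f i) -> 0 <= rsum n f.
Proof.
  induction n as [|n IH]; simpl; intros H; [lra|].
  assert (0 <= f n) by (apply H; lia).
  assert (0 <= rsum n f) by (apply IH; intros; apply H; lia).
  lra.
Qed.

Lemma rsum_pos n f i :
  (forall i, (i < n)%nat -> 0 <= f i) -> (i < n)%nat -> 0 < f i -> 0 < rsum n f.
Proof.
  induction n as [|n IH]; simpl; intros H Hi Hf; [lia|].
  assert (0 <= f n) by (apply H; lia).
  destruct (Nat.eq_dec i n) as [->|Hne].
  - assert (0 <= rsum n f) by (apply rsum_nonneg; intros; apply H; lia). lra.
  - assert (0 < rsum n f) by (apply IH; [intros; apply H; lia|lia|exact Hf]). lra.
Qed.

Lemma rmaxn_nonneg n f : 0 <= rmaxn n f.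
Proof. induction n as [|n IH]; simpl; [lra|]. eapply Rle_trans; [apply IH|apply Rmax_l]. Qed.

Lemma rmaxn_ge n f i : (i < n)%nat -> f i <= rmaxn n f.
Proof.
  induction n as [|n IH]; simpl; intros Hi; [lia|].
  destruct (Nat.eq_dec i n) as [->|Hne]; [apply Rmax_r|].
  eapply Rle_trans; [apply IH; lia|apply Rmax_l].
Qed.

Lemma Un_cv_const r : Un_cv (fun _ => r) r.
Proof.
  intros e He; exists 0%nat; intros; unfold Rdist.
  rewrite Rminus_eq_0, Rabs_R0; lra.
Qed.

Lemma Un_cv_rsum n (u : nat -> nat -> R) (l : nat -> R) :
  (forall j, (j < n)%nat -> Un_cv (fun k => u k j) (l j)) ->
  Un_cv (fun k => rsum n (u k)) (rsum n l).
Proof.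
  induction n as [|n IH]; simpl; intros H; [apply Un_cv_const|].
  apply CV_plus; [apply IH; intros; apply H|apply H]; lia.
Qed.

Lemma Un_cv_dot n c (u : nat -> nat -> R) (l : nat -> R) :
  (forall j, (j < n)%nat -> Un_cv (fun k => u k j) (l j)) ->
  Un_cv (fun k => dot n c (u k)) (dot n c l).
Proof.
  intros H; apply (Un_cv_rsum n (fun k j => c j * u k j)).
  intros j Hj; apply CV_mult; [apply Un_cv_const|now apply H].
Qed.

Lemma bounded_nonneg_series (u : nat -> R) (M : R) :
  (forall j, 0 <= u j) -> (forall N, sum_f_R0 u N <= M) ->
  exists l, infinite_sum u l /\ l <= M.
Proof.
  intros Hu HM.
  destruct (growing_cv (sum_f_R0 u)) as [l Hl].
  - intros N; simpl; specialize (Hu (S N)); lra.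
  - exists M; intros z [N ->]; apply HM.
  - exists l; split; [exact Hl|].
    exact (Rle_cv_lim HM Hl (Un_cv_const M)).
Qed.

Section MomentumDescent.

Variables (f a t w : nat -> R).
Hypothesis first_step : f 0%nat - f 1%nat = a 0%nat.
Hypothesis momentum_step :
  forall k, (1 <= k)%nat -> f k - f (S k) = a k + t k * (f (pred k) - f k).
Hypothesis a_pos : forall k, 0 < a k.
Hypothesis t_nonneg : forall k, (1 <= k)%nat -> 0 <= t k.
Hypothesis w_0 : w 0%nat = 1.
Hypothesis w_S : forall k, w (S k) = w k * t (S k).

Lemma weight_nonneg k : 0 <= w k.
Proof.
  induction k as [|k IH]; [rewrite w_0; lra|].
  rewrite w_S; apply Rmult_le_pos; [exact IH|apply t_nonneg; lia].
Qed.

Lemma decrement_pos k : 0 < f k - f (S k).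
Proof.
  induction k as [|k IH]; [rewrite first_step; apply a_pos|].
  rewrite momentum_step by lia; simpl pred.
  assert (0 <= t (S k) * (f k - f (S k))) by (apply Rmult_le_pos; [apply t_nonneg; lia|lra]).
  specialize (a_pos (S k)); lra.
Qed.

Lemma decrement_ge_weight k : w k * a 0%nat <= f k - f (S k).
Proof.
  induction k as [|k IH]; [rewrite w_0, first_step; lra|].
  rewrite momentum_step, w_S by lia; simpl pred.
  assert (t (S k) * (w k * a 0%nat) <= t (S k) * (f k - f (S k)))
    by (apply Rmult_le_compat_l; [apply t_nonneg; lia|exact IH]).
  specialize (a_pos (S k)); nra.
Qed.

Lemma weight_tail_partial_sum k N :
  a 0%nat * sum_f_R0 (fun j => w (k + j)%nat) N <= f k - f (k + S N)%nat.
Proof.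
  induction N as [|N IH]; simpl.
  - rewrite Nat.add_0_r, Nat.add_1_r; specialize (decrement_ge_weight k); lra.
  - replace (k + S (S N))%nat with (S (k + S N)) by lia.
    specialize (decrement_ge_weight (k + S N)); lra.
Qed.

Variable f_lim : R.
Hypothesis f_cv : Un_cv f f_lim.

Lemma limit_le k : f_lim <= f k.
Proof.
  apply decreasing_ineq; [|exact f_cv].
  intros j; specialize (decrement_pos j); lra.
Qed.

Lemma limit_lt k : f_lim < f k.
Proof. specialize (decrement_pos k); specialize (limit_le (S k)); lra. Qed.

Lemma weight_tail_series k :
  exists G, infinite_sum (fun j => w (k + j)%nat) G /\ G <= (f k - f_lim) / a 0%nat.
Proof.
  pose proof (a_pos 0%nat) as Ha0.
  apply bounded_nonneg_series; [intros; apply weight_nonneg|].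
  intros N; apply (Rmult_le_reg_l (a 0%nat)); [exact Ha0|].
  replace (a 0%nat * ((f k - f_lim) / a 0%nat)) with (f k - f_lim) by (field; lra).
  specialize (weight_tail_partial_sum k N); specialize (limit_le (k + S N)); lra.
Qed.

End MomentumDescent.

Lemma normal_equations_residual_orth m n A c (xk yk : nat -> R) i :
  (forall i, (i < m)%nat ->
     rsum n (fun j => A i j * (xk j)^2 * tmatvec m A yk j)
     = rsum n (fun j => A i j * (xk j)^2 * c j)) ->
  (i < m)%nat ->
  rsum n (fun j => A i j * (xk j)^2 * sres m A c yk j) = 0.
Proof.
  intros Hnormal Hi; unfold sres.
  rewrite (rsum_ext n _ (fun j => A i j * xk j ^ 2 * c j
                                 + (-1) * (A i j * xk j ^ 2 * tmatvec m A yk j)))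
    by (intros; ring).
  rewrite rsum_plus, rsum_scal, Hnormal by exact Hi; ring.
Qed.

Lemma normal_equations_cost_identity m n A c (xk yk : nat -> R) :
  (forall i, (i < m)%nat ->
     rsum n (fun j => A i j * (xk j)^2 * tmatvec m A yk j)
     = rsum n (fun j => A i j * (xk j)^2 * c j)) ->
  rsum n (fun j => c j * ((xk j)^2 * sres m A c yk j))
  = rsum n (fun j => (xk j * sres m A c yk j)^2).
Proof.
  intros Hnormal.
  set (s := sres m A c yk).
  assert (Hsplit : rsum n (fun j => c j * ((xk j)^2 * s j))
     = rsum n (fun j => (xk j * s j)^2)
       + rsum n (fun j => rsum m (fun i => yk i * (A i j * (xk j)^2 * s j)))).
  { rewrite <- rsum_plus; apply rsum_ext; intros j _.
    assert (HAy : rsum m (fun i => yk i * (A i j * xk j ^ 2 * s j))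
                  = ((xk j)^2 * s j) * tmatvec m A yk j)
      by (unfold tmatvec; rewrite <- rsum_scal; apply rsum_ext; intros; ring).
    rewrite HAy; replace (c j) with (s j + tmatvec m A yk j) by (unfold s, sres; ring).
    ring. }
  rewrite Hsplit, rsum_swap, (rsum_ext m _ (fun _ => 0)), rsum_zero; [ring|].
  intros i Hi; rewrite rsum_scal.
  unfold s; rewrite normal_equations_residual_orth by assumption; ring.
Qed.

Section GAFSCost.

Variables (m n : nat) (A : nat -> nat -> R) (c : nat -> R) (alpha beta : R)
  (x y : nat -> nat -> R).
Hypothesis gafs : GAFS m n A c alpha beta x y.

Definition scaled_residual k j := x k j * sres m A c (y k) j.

Definition gafs_decrement k :=
  alpha * rsum n (fun j => scaled_residual k j ^ 2) / gam n (scaled_residual k).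

Let cost k := dot n c (x k).

Lemma gam_scaled_residual_pos k : 0 < gam n (scaled_residual k).
Proof.
  destruct gafs as (_ & _ & _ & Hpos & _).
  destruct (Hpos k) as (i & Hi & Hp).
  eapply Rlt_le_trans; [exact Hp|apply (rmaxn_ge n (scaled_residual k)); exact Hi].
Qed.

Lemma gafs_decrement_pos k : 0 < alpha -> 0 < gafs_decrement k.
Proof.
  intros Halpha.
  destruct gafs as (_ & _ & _ & Hpos & _).
  destruct (Hpos k) as (i & Hi & Hp).
  assert (0 < rsum n (fun j => scaled_residual k j ^ 2)).
  { apply (rsum_pos n _ i); [intros; apply pow2_ge_0|exact Hi|apply pow_lt, Hp]. }
  pose proof (gam_scaled_residual_pos k).
  unfold gafs_decrement, Rdiv; apply Rmult_lt_0_compat;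
    [nra|apply Rinv_0_lt_compat; assumption].
Qed.

Lemma betak_nonneg k : (1 <= k)%nat -> 0 <= beta -> 0 <= betak n beta x k.
Proof.
  intros Hk Hbeta.
  destruct gafs as (_ & _ & _ & _ & Hmn).
  assert (0 < momnorm n x k).
  { pose proof (rmaxn_nonneg n (fun i => Rabs ((x k i - x (pred k) i) / x k i))).
    specialize (Hmn k Hk); unfold momnorm, infnorm in *; lra. }
  unfold betak, Rdiv; apply Rmult_le_pos; [exact Hbeta|].
  left; apply Rinv_0_lt_compat; assumption.
Qed.

Lemma gafs_cost_first_step : cost 0%nat - cost 1%nat = gafs_decrement 0%nat.
Proof.
  destruct gafs as (Hnormal & H1 & _).
  unfold cost, dot.
  rewrite (rsum_ext n (fun j => c j * x 1%nat j)
    (fun j => c j * x 0%nat j + (- (alpha / gam n (scaled_residual 0%nat)))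
                                 * (c j * (x 0%nat j ^ 2 * sres m A c (y 0%nat) j))))
    by (intros j Hj; rewrite H1 by exact Hj; unfold scaled_residual, Rdiv; ring).
  rewrite rsum_plus, rsum_scal, normal_equations_cost_identity by apply Hnormal.
  unfold gafs_decrement, scaled_residual, Rdiv; ring.
Qed.

Lemma gafs_cost_momentum_step k : (1 <= k)%nat ->
  cost k - cost (S k)
  = gafs_decrement k + betak n beta x k * (cost (pred k) - cost k).
Proof.
  intros Hk.
  destruct gafs as (Hnormal & _ & Hstep & _).
  unfold cost, dot.
  rewrite (rsum_ext n (fun j => c j * x (S k) j)
    (fun j => c j * x k j + (- (alpha / gam n (scaled_residual k)))
                              * (c j * (x k j ^ 2 * sres m A c (y k) j))
              + betak n beta x k * (c j * x k j + (-1) * (c j * x (pred k) j))))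
    by (intros j Hj; rewrite Hstep by assumption;
        unfold scaled_residual, betak, Rdiv; ring).
  rewrite !rsum_plus, !rsum_scal, normal_equations_cost_identity by apply Hnormal.
  rewrite (rsum_plus n (fun i => c i * x k i)), (rsum_scal n (-1)).
  unfold gafs_decrement, scaled_residual, Rdiv; ring.
Qed.

End GAFSCost.

Theorem lemma8 (m n : nat) (A : nat -> nat -> R) (b c : nat -> R)
  (alpha beta : R) (x y : nat -> nat -> R) (xstar : nat -> R) :
  full_row_rank m n A ->
  (exists z, feasible m n A b z /\ forall j, (j < n)%nat -> 0 < z j) ->
  (exists z1 z2, feasible m n A b z1 /\ feasible m n A b z2 /\ dot n c z1 <> dot n c z2) ->
  (exists z, feasible m n A b z /\ forall w, feasible m n A b w -> dot n c z <= dot n c w) ->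
  inQ alpha beta ->
  (forall j, (j < n)%nat -> 0 < x 0%nat j) ->
  (forall i, (i < m)%nat -> matvec n A (x 0%nat) i = b i) ->
  GAFS m n A c alpha beta x y ->
  (forall j, (j < n)%nat -> Un_cv (fun k => x k j) (xstar j)) ->
  exists Nbar, 0 < Nbar /\
    forall k, 0 < dot n c (x k) - dot n c xstar /\
      exists Gk, infinite_sum (fun j => gammak n beta x (k + j)%nat) Gk /\
        Gk / (dot n c (x k) - dot n c xstar) <= Nbar.
Proof.
  intros _ _ _ _ ([Halpha _] & [Hbeta _] & _) _ _ gafs Hcv.
  set (f := fun k => dot n c (x k)).
  set (a := gafs_decrement m n A c alpha x y).
  assert (Ha : forall k, 0 < a k) by (intros; apply gafs_decrement_pos with beta; assumption).
  assert (Hf0 := gafs_cost_first_step m n A c alpha beta x y gafs).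
  assert (Hfk := gafs_cost_momentum_step m n A c alpha beta x y gafs).
  assert (Ht : forall k, (1 <= k)%nat -> 0 <= betak n beta x k)
    by (intros; eapply betak_nonneg; eassumption).
  assert (Hcost : Un_cv f (dot n c xstar)) by (apply Un_cv_dot; exact Hcv).
  exists (1 / a 0%nat); split; [unfold Rdiv; rewrite Rmult_1_l; apply Rinv_0_lt_compat, Ha|].
  intros k; fold (f k).
  assert (Hgap : 0 < f k - dot n c xstar).
  { pose proof (limit_lt f a (betak n beta x) Hf0 Hfk Ha Ht _ Hcost k); lra. }
  split; [exact Hgap|].
  destruct (weight_tail_series f a (betak n beta x) (gammak n beta x) Hf0 Hfk Ha Ht
              eq_refl (fun _ => eq_refl) _ Hcost k) as (G & HG & HGle).
  exists G; split; [exact HG|].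
  apply (Rmult_le_reg_r (f k - dot n c xstar)); [exact Hgap|].
  replace (G / (f k - dot n c xstar) * (f k - dot n c xstar)) with G by (field; lra).
  replace (1 / a 0%nat * (f k - dot n c xstar)) with ((f k - dot n c xstar) / a 0%nat)
    by (field; specialize (Ha 0%nat); lra).
  exact HGle.
Qed.
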